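(* Let $G$ be a graph with a linear order $<$ on $V(G)$ satisfying the X-property, let $s<t$ be vertices with $d^*:=\operatorname{dist}(s,t)<\infty$, and let $P=p_0,p_1,\dots,p_{d^*}$ (with $p_0=s$, $p_{d^*}=t$) be a shortest $s$-$t$ path with $\operatorname{lefti}(P)<\operatorname{righti}(P)$. Then $p_i<p_j$ for all indices $i<\operatorname{lefti}(P)<j$, and $p_i<p_j$ for all indices $i<\operatorname{righti}(P)<j$.
   Context: The X-property: for all vertices $p<q<r<s$, if $\{p,r\}\in E(G)$ and $\{q,s\}\in E(G)$ then $\{p,s\}\in E(G)$. $\operatorname{dist}$ is the number of edges of a shortest path. $\operatorname{lefti}(P)$ is the index $i$ such that $p_i$ is the leftmost (w.r.t. $<$) vertex of $P$, and $\operatorname{righti}(P)$ the index of the rightmost vertex of $P$. *)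

From mathcomp Require Import all_boot all_order.
Set Implicit Arguments. Unset Strict Implicit. Unset Printing Implicit Defensive.
Import Order.TTheory.
Local Open Scope order_scope.

Definition simple_graph (T : eqType) (e : rel T) : Prop :=
  symmetric e /\ irreflexive e.

Definition X_property (d : Order.disp_t) (T : orderType d) (e : rel T) : Prop :=
  forall p q r s : T, p < q -> q < r -> r < s -> e p r -> e q s -> e p s.

(* The walk  s :: q  (vertices p_0 = s, p_1, ..., p_k, with k = size q edges)
   goes from s to t. *)
Definition walk_st (T : eqType) (e : rel T) (s t : T) (q : seq T) : Prop :=
  path e s q /\ last s q = t.

(* s :: q is a shortest s-t path: it is an s-t walk and every s-t walk has
   at least as many edges. Its number of edges size q is dist(s,t). *)
Definition shortest_st (T : eqType) (e : rel T) (s t : T) (q : seq T) : Prop :=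
  walk_st e s t q /\ forall q', walk_st e s t q' -> size q <= size q'.

Definition is_lefti (d : Order.disp_t) (T : orderType d) (x0 : T) (P : seq T) (l : nat) : Prop :=
  (l < size P)%N /\ forall k, (k < size P)%N -> nth x0 P l <= nth x0 P k.

Definition is_righti (d : Order.disp_t) (T : orderType d) (x0 : T) (P : seq T) (r : nat) : Prop :=
  (r < size P)%N /\ forall k, (k < size P)%N -> nth x0 P k <= nth x0 P r.

From mathcomp Require Import all_boot all_order.
From mathcomp Require Import zify.
Import Order.TTheory.
Set Implicit Arguments. Unset Strict Implicit. Unset Printing Implicit Defensive.
Local Open Scope order_scope.

(* If a vertex w lies strictly between the ends of an edge uv, the X-property
   puts every neighbour of w that is adjacent to neither u nor v strictly
   between them as well.  Along a chordless path, such as a shortest one, a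
   vertex p_j (j >= k + 2) straddled by the edge p_k p_(k+1) therefore traps
   all later vertices, and a straddled earlier vertex traps all earlier ones.
   If i < l < j but p_j < p_i, the path goes down from p_i to its minimum p_l
   through an edge straddling p_j, which traps the maximum p_r when j <= r;
   symmetrically around r.  In the remaining case i < l < r < j, the edge
   p_a p_(a+1) (i <= a < l) crossing the level of p_j traps t, and the edge
   p_b p_(b+1) (r <= b < j) crossing the level of p_i traps s, which gives
   t < p_a and p_(b+1) <= s.  As s < t, p_(b+1) then lies below both s and
   p_a while t lies between them.  This is impossible: by a parity count of
   the edges of p_0 ... p_a that straddle it, whether a vertex beyond p_(a+1)
   separates s from p_a does not depend on the vertex. *)

Lemma chain_up (P : pred nat) a b : (a <= b)%N ->
  (forall m, (a <= m < b)%N -> P m -> P m.+1) -> P a -> P b.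
Proof.
elim: b => [|b IH] ab step Pa; first by move: ab; rewrite leqn0 => /eqP <-.
move: ab; rewrite leq_eqVlt => /predU1P[<- //|ab].
by apply: (step); [lia | apply: IH => // m mb; apply: (step); lia].
Qed.

Lemma chain_down (P : pred nat) a b : (a <= b)%N ->
  (forall m, (a <= m < b)%N -> P m.+1 -> P m) -> P b -> P a.
Proof.
elim: b => [|b IH] ab step Pb; first by move: ab; rewrite leqn0 => /eqP ->.
move: ab; rewrite leq_eqVlt => /predU1P[-> //|ab].
by apply: IH => [|m mb|]; [lia | apply: (step); lia | apply: (step) Pb; lia].
Qed.

Lemma exists_crossing (P : pred nat) a b : (a <= b)%N -> P a -> ~~ P b ->
  exists2 c, (a <= c < b)%N & P c && ~~ P c.+1.
Proof.
move=> ab Pa nPb.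
have [/existsP[c /and3P[ac Pc nPc1]]|/existsPn noc] :=
  boolP [exists c : 'I_b, [&& (a <= c)%N, P c & ~~ P c.+1]].
  by exists c; [rewrite ac ltn_ord | rewrite Pc nPc1].
suff Pb : P b by rewrite Pb in nPb.
apply: chain_up ab _ Pa => m /andP[am mb] Pm; apply: contraT => nPm1.
by have := noc (Ordinal mb); rewrite /= am Pm nPm1.
Qed.

(* For z outside {u, v} this says that z lies strictly between u and v; as an
   exclusive or, it telescopes along a path (straddles_trans). *)
Definition straddles (d : Order.disp_t) (T : orderType d) (u v z : T) :=
  (z < u) != (z < v).

Section Straddles.
Variables (d : Order.disp_t) (T : orderType d).
Implicit Types u v w z : T.

Lemma straddlesC u v z : straddles u v z = straddles v u z.
Proof. by rewrite /straddles eq_sym. Qed.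

Lemma straddles_trans u v w z :
  straddles u w z = straddles u v z (+) straddles v w z.
Proof. by rewrite /straddles; case: (z < u); case: (z < v); case: (z < w). Qed.

Lemma straddles_lt u v z : v < u -> straddles u v z = (v <= z) && (z < u).
Proof.
move=> vu; rewrite /straddles leNgt.
by case: (ltP z v) => [zv|_]; [rewrite (lt_trans zv vu) | case: (z < u)].
Qed.

End Straddles.

Section InducedPath.
Variables (d : Order.disp_t) (T : orderType d) (e : rel T).
Hypotheses (e_sym : symmetric e) (eX : X_property e).

Lemma straddles_edge u v w x : e u v -> e w x -> straddles u v w ->
  ~~ e x u -> ~~ e x v -> straddles u v x.
Proof.
wlog uv : u v / u < v.
  move=> wlog_uv; case: (ltgtP u v) => [|vu|<-]; first exact: wlog_uv.
    move=> euv ewx Sw nxu nxv; rewrite straddlesC.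
    by apply: wlog_uv => //; rewrite 1?e_sym 1?straddlesC.
  by rewrite /straddles eqxx.
move=> euv ewx; rewrite !(straddlesC u) !straddles_lt // => /andP[uw wv] nxu nxv.
have {}uw : u < w.
  by rewrite lt_neqAle uw andbT; apply: contraNneq nxu => ->; rewrite e_sym.
have xv : x != v by apply: contraNneq nxu => ->; rewrite e_sym.
apply/andP; split.
  rewrite leNgt; apply: contra nxv => xu.
  by apply: eX xu uw wv _ euv; rewrite e_sym.
rewrite ltNge; apply: contra nxu => vx.
by rewrite e_sym; apply: eX uw wv _ euv ewx; rewrite lt_neqAle eq_sym xv.
Qed.

Variables (p : nat -> T) (n : nat).
Hypothesis p_edge : forall k, (k < n)%N -> e (p k) (p k.+1).
Hypothesis p_inj : forall i j, (i <= n)%N -> (j <= n)%N -> p i = p j -> i = j.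
Hypothesis p_chordless : forall i j, (i.+1 < j <= n)%N -> ~~ e (p i) (p j).

Lemma path_lt_of_le i j : (i <= n)%N -> (j <= n)%N -> i != j ->
  p i <= p j -> p i < p j.
Proof.
move=> iN jN ij; rewrite le_eqVlt => /predU1P[/(p_inj iN jN) E|//].
by rewrite E eqxx in ij.
Qed.

Lemma path_nonadj i j : (i <= n)%N -> (j <= n)%N -> (i.+1 < j)%N || (j.+1 < i)%N ->
  ~~ e (p i) (p j).
Proof.
by move=> iN jN /orP[] ?; [|rewrite e_sym]; apply: p_chordless; lia.
Qed.

Lemma straddles_path_step k i j : (k < n)%N -> (j <= n)%N -> e (p i) (p j) ->
  (k.+3 <= j)%N || (j.+2 <= k)%N ->
  straddles (p k) (p k.+1) (p i) -> straddles (p k) (p k.+1) (p j).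
Proof.
move=> kn jn eij far Si.
by apply: straddles_edge (p_edge kn) eij Si _ _; apply: path_nonadj; lia.
Qed.

Definition edge_straddles k i := straddles (p k) (p k.+1) (p i).

Lemma edge_straddles_fwd k c m : (k.+2 <= c <= m)%N -> (m <= n)%N ->
  edge_straddles k c -> edge_straddles k m.
Proof.
move=> /andP[kc cm] mn; apply: (chain_up (P := edge_straddles k)) cm _ => i ci.
by apply: straddles_path_step; [lia | lia | apply: p_edge; lia | lia].
Qed.

Lemma edge_straddles_bwd k c m : (m <= c)%N -> (c < k < n)%N ->
  edge_straddles k c -> edge_straddles k m.
Proof.
move=> mc /andP[ck kn]; apply: (chain_down (P := edge_straddles k)) mc _ => i mi.
by apply: straddles_path_step; rewrite 1?e_sym; [lia | lia | apply: p_edge; lia | lia].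
Qed.

Lemma edge_straddles_tail k m : (k.+3 <= m <= n)%N ->
  edge_straddles k m = edge_straddles k n.
Proof.
move=> /andP[km mn]; apply/idP/idP; first by apply: edge_straddles_fwd; lia.
apply: (chain_down (P := edge_straddles k)) mn _ => i mi.
by apply: straddles_path_step; rewrite 1?e_sym; [lia | lia | apply: p_edge; lia | lia].
Qed.

Lemma straddles_parity i j g : (i <= j)%N -> (j.+2 <= g <= n)%N ->
  straddles (p i) (p j) (p g) = straddles (p i) (p j) (p n).
Proof.
elim: j => [|j IH]; first by rewrite leqn0 => /eqP-> _; rewrite /straddles !eqxx.
rewrite leq_eqVlt => /predU1P[-> _|ij jg]; first by rewrite /straddles !eqxx.
rewrite [LHS](straddles_trans _ (p j)) [RHS](straddles_trans _ (p j)) IH; [|lia|lia].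
by congr (_ (+) _); apply: edge_straddles_tail; lia.
Qed.

Variables l r : nat.
Hypotheses (lr : (l < r)%N) (rn : (r <= n)%N).
Hypothesis p_min : forall k, (k <= n)%N -> p l <= p k.
Hypothesis p_max : forall k, (k <= n)%N -> p k <= p r.
Hypothesis p_0n : p 0 < p n.

Lemma path_lt_around_min_max i j : (i < l)%N -> (r < j <= n)%N -> p i < p j.
Proof.
move=> il /andP[rj jn]; apply: path_lt_of_le; [lia | lia | lia |].
rewrite leNgt; apply/negP => ji.
have nPl : ~~ (p j < p l) by rewrite -leNgt p_min.
have [a /andP[ia al] /andP[ja ja1]] :=
  exists_crossing (P := fun k => p j < p k) (ltnW il) ji nPl.
have ir : p i < p r by apply: path_lt_of_le (p_max _); lia.
have nPj : ~~ (p i < p j) by rewrite -leNgt ltW.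
have [b /andP[rb bj] /andP[ib ib1]] :=
  exists_crossing (P := fun k => p i < p k) (ltnW rj) ir nPj.
have [ajn ibn abn bn] : [/\ (a.+2 <= j <= n), (i < b < n), (a.+2 <= b.+1 <= n)
   & (b.+1 <= n)]%N by split; lia.
have a1a : p a.+1 < p a by rewrite -leNgt in ja1; apply: le_lt_trans ja1 ja.
have b1b : p b.+1 < p b by rewrite -leNgt in ib1; apply: le_lt_trans ib1 ib.
have Sa : edge_straddles a j by rewrite /edge_straddles /straddles ja (negbTE ja1).
have Sb : edge_straddles b i by rewrite /edge_straddles /straddles ib (negbTE ib1).
have /andP[_ na] : p a.+1 <= p n < p a.
  by rewrite -straddles_lt //; apply: edge_straddles_fwd ajn (leqnn n) Sa.
have /andP[b10 _] : p b.+1 <= p 0 < p b.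
  by rewrite -straddles_lt //; apply: edge_straddles_bwd (leq0n i) ibn Sb.
have [ab1|b1a] := leP (p a) (p b.+1).
  by have := lt_trans p_0n (lt_le_trans na (le_trans ab1 b10)); rewrite ltxx.
have b10' : p b.+1 < p 0 by apply: path_lt_of_le b10.
have := straddles_parity (leq0n a) abn; rewrite /straddles.
by rewrite b10' b1a (lt_gtF p_0n) na.
Qed.

Lemma path_lt_around_min i j : (i < l < j)%N -> (j <= n)%N -> p i < p j.
Proof.
move=> /andP[il lj] jn; have [rj|jr] := ltnP r j.
  by apply: path_lt_around_min_max; rewrite ?rj.
apply: path_lt_of_le; [lia | lia | lia |].
rewrite leNgt; apply/negP => ji.
have nPl : ~~ (p j < p l) by rewrite -leNgt p_min.
have [a /andP[ia al] /andP[ja ja1]] :=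
  exists_crossing (P := fun k => p j < p k) (ltnW il) ji nPl.
have [ajr an] : (a.+2 <= j <= r)%N /\ (a < n)%N by split; lia.
have : edge_straddles a r.
  by apply: edge_straddles_fwd ajr rn _; rewrite /edge_straddles /straddles ja (negbTE ja1).
by rewrite /edge_straddles /straddles !ltNge !p_max ?(ltnW an).
Qed.

Lemma path_lt_around_max i j : (i < r < j)%N -> (j <= n)%N -> p i < p j.
Proof.
move=> /andP[ir rj] jn; have [il|li] := ltnP i l.
  by apply: path_lt_around_min_max; rewrite ?rj.
apply: path_lt_of_le; [lia | lia | lia |].
rewrite leNgt; apply/negP => ji.
have pir : p i < p r by apply: path_lt_of_le (p_max _); lia.
have nPj : ~~ (p i < p j) by rewrite -leNgt ltW.
have [b /andP[rb bj] /andP[ib ib1]] :=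
  exists_crossing (P := fun k => p i < p k) (ltnW rj) pir nPj.
have [ibn b1n lb1] : [/\ (i < b < n), (b.+1 <= n) & l != b.+1]%N by split; lia.
have : edge_straddles b l.
  by apply: edge_straddles_bwd li ibn _; rewrite /edge_straddles /straddles ib (negbTE ib1).
have plb : p l < p b by apply: le_lt_trans (p_min _) ib; lia.
have plb1 : p l < p b.+1 by apply: path_lt_of_le (p_min _); lia.
by rewrite /edge_straddles /straddles plb plb1.
Qed.

End InducedPath.

Section ShortestWalk.
Variables (T : eqType) (e : rel T) (s t : T) (q : seq T).

Lemma last_take_nth (x : T) (w : seq T) k : (k <= size w)%N ->
  last x (take k w) = nth x (x :: w) k.
Proof.
by move=> kw; rewrite (last_nth x) size_takel //; case: k kw => //= k kw; rewrite nth_take.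
Qed.

Lemma walk_st_drop k : walk_st e s t q -> (k <= size q)%N ->
  walk_st e (nth s (s :: q) k) t (drop k q).
Proof.
case=> + + kq; rewrite -{1 2}(cat_take_drop k q) cat_path last_cat last_take_nth //.
by case/andP.
Qed.

Hypothesis q_shortest : shortest_st e s t q.

Lemma shortest_st_splice i k : (i <= size q)%N -> (k <= size q)%N ->
  walk_st e (nth s (s :: q) i) t (drop k q) -> (k <= i)%N.
Proof.
have [[q_path _] q_min] := q_shortest; move=> iq kq [drop_path drop_last].
suff /q_min : walk_st e s t (take i q ++ drop k q).
  by rewrite size_cat size_takel // size_drop; lia.
move: q_path; rewrite -{1}(cat_take_drop i q) cat_path => /andP[take_path _].
by split; rewrite ?cat_path ?last_cat last_take_nth // take_path.
Qed.

Lemma shortest_st_nth_inj i j : (i <= size q)%N -> (j <= size q)%N ->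
  nth s (s :: q) i = nth s (s :: q) j -> i = j.
Proof.
have [q_walk _] := q_shortest; move=> iq jq E.
apply/eqP; rewrite eqn_leq; apply/andP; split; apply: shortest_st_splice => //.
  by rewrite -E; apply: walk_st_drop.
by rewrite E; apply: walk_st_drop.
Qed.

Lemma shortest_st_chordless i j : (i.+1 < j <= size q)%N ->
  ~~ e (nth s (s :: q) i) (nth s (s :: q) j).
Proof.
case: j => [|j] // /andP[ij jq]; apply/negP => eij.
have [q_walk _] := q_shortest; have [jpath jlast] := walk_st_drop q_walk jq.
suff /shortest_st_splice : walk_st e (nth s (s :: q) i) t (drop j q) by lia.
rewrite (drop_nth s) //=; split; [exact/andP | exact: jlast].
Qed.

End ShortestWalk.

Theorem lemma8 (d : Order.disp_t) (T : finOrderType d) (e : rel T)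
  (Hg : simple_graph e) (HX : X_property e)
  (s t : T) (Hst : s < t) (q : seq T) (HP : shortest_st e s t q)
  (l r : nat) (Hl : is_lefti s (s :: q) l) (Hr : is_righti s (s :: q) r)
  (Hlr : (l < r)%N) :
  (forall i j : nat, (i < l)%N -> (l < j)%N -> (j < size (s :: q))%N ->
     nth s (s :: q) i < nth s (s :: q) j) /\
  (forall i j : nat, (i < r)%N -> (r < j)%N -> (j < size (s :: q))%N ->
     nth s (s :: q) i < nth s (s :: q) j).
Proof.
have [[q_path q_last] _] := HP; have [e_sym _] := Hg.
have [_ l_min] := Hl; have [r_in r_max] := Hr.
have q_edge : forall k, (k < size q)%N -> e (nth s (s :: q) k) (nth s (s :: q) k.+1).
  exact/(pathP s).
have st : nth s (s :: q) 0 < nth s (s :: q) (size q) by rewrite -last_nth q_last.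
have inj := shortest_st_nth_inj HP; have chordless := shortest_st_chordless HP.
split=> i j il lj jq.
  by apply: (path_lt_around_min (p := nth s (s :: q)) e_sym HX q_edge inj
    chordless Hlr r_in l_min r_max st); rewrite ?il.
by apply: (path_lt_around_max (p := nth s (s :: q)) e_sym HX q_edge inj
  chordless Hlr r_in l_min r_max st); rewrite ?il.
Qed.
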